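(* Let $K$ be a field, $\alpha$ an ordinal and $0<n<\omega$. Then $B_{\alpha,n}\in\mathfrak R_K$, $B_{\alpha,n}$ has Loewy length $\alpha+1$ and top layer dimension $n$. Moreover, if $\alpha$ is countable, then $B_{\alpha,n}$ is of countable type.
   Context: Socle sequence: $S_0=0$, $S_{\alpha+1}/S_\alpha=\mathrm{Soc}(R/S_\alpha)$, unions at limits; semiartinian of Loewy length $\sigma+1$ means $S_{\sigma+1}=R\ne S_\sigma$; layers $L_\alpha=S_{\alpha+1}/S_\alpha$. $K^{(\lambda)}$ is the direct sum of $\lambda$ copies of $K$ as a $K$-algebra without unit. $\mathfrak R_K$ is the class of commutative von Neumann regular semiartinian $K$-algebras $R$ of Loewy length $\sigma+1$ such that for each $\alpha\le\sigma$ there is a cardinal $\lambda_\alpha>0$ and a $K$-linear isomorphism of $K$-algebras without unit $L_\alpha\cong K^{(\lambda_\alpha)}$; $\lambda_\sigma$ (finite) is the top layer dimension; $R$ is of countable type if $\sigma$ and all $\lambda_\alpha$ are countable. For a sequence $\mathcal R=(R_i\mid i\in A)$ of $K$-algebras indexed by an infinite set $A$, $R(A,K,\mathcal R)$ is the $K$-subalgebra $\bigoplus_{i\in A}R_i\oplus 1_P\cdot K$ of $P=\prod_{i\in A}R_i$. $\boxplus$ is ring direct product. Define $B_{0,1}=K$; $B_{\beta+1,1}=R(\aleph_0,K,\mathcal R)$ with $\mathcal R$ the constant sequence $R_m=B_{\beta,1}$ ($m<\aleph_0$); for limit $\alpha$, $B_{\alpha,1}=R(\alpha,K,(B_{\beta,1}\mid\beta<\alpha))$;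 and $B_{\alpha,n}=B_{\alpha,1}\boxplus\cdots\boxplus B_{\alpha,1}$ ($n$ copies). *)

From mathcomp Require Import ssreflect ssrfun ssrbool eqtype ssrnat seq fintype ssralg.
From Stdlib Require List.
Unset Printing Implicit Defensive.
Import GRing.Theory.
Local Open Scope ring_scope.

(* An ordinal alpha is the order type of a well-ordered type T; the    *)
(* elements of T are the ordinals beta < alpha.                        *)
Record wo := WO {
  car :> Type;
  ltw : car -> car -> Prop;
  ltw_wf : well_founded ltw;
  ltw_trans : forall x y z, ltw x y -> ltw y z -> ltw x z;
  ltw_total : forall x y, ltw x y \/ x = y \/ ltw y x }.

(* option T = the ordinals <= alpha, with None playing the role of alpha. *)
Definition ext_lt {T : wo} (a b : option T) : Prop :=
  match a, b with
  | Some x, Some y => ltw T x y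
  | Some _, None => True
  | None, _ => False
  end.

Lemma ext_wf (T : wo) : well_founded (@ext_lt T).
Proof.
assert (accS : forall x : car T, Acc (@ext_lt T) (Some x)).
{ intro x. induction (ltw_wf T x) as [x _ IH]. constructor.
  intros [y|] H; [ exact (IH y H) | destruct H ]. }
intros [x|]; [ exact (accS x) | ].
constructor. intros [y|] H; [ exact (accS y) | destruct H ].
Qed.

Definition countable (I : Type) := exists f : I -> nat, injective f.

Definition is_zero {A} (R : A -> A -> Prop) t := forall s, ~ R s t.
Definition is_pred {A} (R : A -> A -> Prop) s t :=
  R s t /\ forall u, R u t -> u = s \/ R u s.
Definition is_limit {A} (R : A -> A -> Prop) t :=
  (exists s, R s t) /\ ~ (exists s, is_pred R s t).

(* Commutative K-algebras presented as algebras of K-valued functions  *)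
(* (pointwise operations) on a set X, given by a predicate P.          *)
Section FunAlg.
Variables (K : fieldType) (X : Type).

Definition fpred := (X -> K) -> Prop.
Definition f0 : X -> K := fun _ => 0.
Definition fadd (f g : X -> K) : X -> K := fun x => f x + g x.
Definition fopp (f : X -> K) : X -> K := fun x => - f x.
Definition fmul (f g : X -> K) : X -> K := fun x => f x * g x.
Definition fscale (k : K) (f : X -> K) : X -> K := fun x => k * f x.
Definition fsum (s : seq (X -> K)) : X -> K := foldr fadd f0 s.

Definition fsubset (I J : fpred) := forall f, I f -> J f.
Definition fsameset (I J : fpred) := forall f, I f <-> J f.

Definition is_falg (P : fpred) :=
  P f0 /\ [/\ (forall f g, P f -> P g -> P (fadd f g)),
      (forall f, P f -> P (fopp f)),
      (forall f g, P f -> P g -> P (fmul f g)),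
      (forall k f, P f -> P (fscale k f)) &
      exists e, P e /\ forall f, P f -> fmul e f = f].

Definition vN_regular (P : fpred) :=
  forall a, P a -> exists x, P x /\ fmul (fmul a x) a = a.

Definition is_ideal (P I : fpred) :=
  [/\ fsubset I P, I f0, (forall f g, I f -> I g -> I (fadd f g)),
      (forall f, I f -> I (fopp f)) &
      (forall r f, P r -> I f -> I (fmul r f))].

(* M/I is a minimal (nonzero) ideal of R/I, via the correspondence theorem *)
Definition minimal_over (P I M : fpred) :=
  [/\ is_ideal P M, fsubset I M, (exists f, M f /\ ~ I f) &
      forall N, is_ideal P N -> fsubset I N -> fsubset N M ->
        fsameset N I \/ fsameset N M].

(* soc_next P I = the ideal J with J/I = Soc(R/I) (sum of the minimal
   ideals of R/I), pulled back to R *)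
Definition soc_next (P I : fpred) : fpred := fun f =>
  P f /\ exists gs : seq (X -> K),
    (forall g, List.In g gs -> exists M, minimal_over P I M /\ M g) /\
    I (fadd f (fopp (fsum gs))).

Definition soc_seq (P : fpred) {A : Type} (R : A -> A -> Prop)
    (wf : well_founded R) : A -> fpred :=
  Fix wf (fun _ => fpred) (fun t rec f =>
    (is_zero R t /\ f = f0) \/
    (exists s (h : R s t), is_pred R s t /\ soc_next P (rec s h) f) \/
    (is_limit R t /\ exists s (h : R s t), rec s h f)).

(* socle sequence (S_beta)_{beta <= sigma}; None stands for sigma *)
Definition Sseq (P : fpred) (sigma : wo) : option sigma -> fpred :=
  soc_seq P _ (ext_wf sigma).

(* R is semiartinian of Loewy length sigma+1 : S_{sigma+1} = R <> S_sigma *)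
Definition loewy (P : fpred) (sigma : wo) :=
  fsameset (soc_next P (Sseq P sigma None)) P /\
  ~ fsameset (Sseq P sigma None) P.

Definition finsupp (Ix : Type) (v : Ix -> K) :=
  exists L : seq Ix, forall i, ~ List.In i L -> v i = 0.

(* The layer soc_next P I / I is isomorphic, as a K-algebra without
   unit, to K^(Ix) (finitely supported functions, pointwise operations):
   stated via a surjective K-linear multiplicative map
   soc_next P I -> K^(Ix) with kernel exactly I. *)
Definition layer_iso (P I : fpred) (Ix : Type) :=
  exists phi : (X -> K) -> (Ix -> K),
  let J := soc_next P I in
  (forall f, J f -> finsupp Ix (phi f)) /\
  [/\ (forall f g, J f -> J g -> phi (fadd f g) = fun i => phi f i + phi g i),
      (forall k f, J f -> phi (fscale k f) = fun i => k * phi f i),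
      (forall f g, J f -> J g -> phi (fmul f g) = fun i => phi f i * phi g i),
      (forall v, finsupp Ix v -> exists f, J f /\ phi f = v) &
      (forall f, J f -> (phi f = fun _ => 0) <-> I f)].

Definition in_RK (P : fpred) :=
  [/\ is_falg P, vN_regular P &
      exists sigma : wo, loewy P sigma /\
        forall beta : option sigma, exists Ix : Type,
          inhabited Ix /\ layer_iso P (Sseq P sigma beta) Ix].

Definition top_dim (P : fpred) (sigma : wo) (n : nat) :=
  layer_iso P (Sseq P sigma None) 'I_n.

Definition countable_type (P : fpred) :=
  in_RK P /\ exists sigma : wo, [/\ loewy P sigma, countable sigma &
     forall beta : option sigma, exists Ix : Type,
       [/\ inhabited Ix, countable Ix & layer_iso P (Sseq P sigma beta) Ix]].

End FunAlg.

Arguments f0 {K X}. Arguments fadd {K X}. Arguments fopp {K X}.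
Arguments fmul {K X}. Arguments fscale {K X}. Arguments fsum {K X}.
Arguments fsubset {K X}. Arguments fsameset {K X}. Arguments is_falg {K X}.
Arguments vN_regular {K X}. Arguments is_ideal {K X}.
Arguments minimal_over {K X}. Arguments soc_next {K X}.
Arguments soc_seq {K X} P {A R}. Arguments Sseq {K X}. Arguments loewy {K X}.
Arguments finsupp {K}. Arguments layer_iso {K X}. Arguments in_RK {K X}.
Arguments top_dim {K X}. Arguments countable_type {K X}.

(* The algebras B_{beta,1} (beta <= alpha), realized as algebras of    *)
(* K-valued functions on a set of "points" (seq (nat + option T)),     *)
(* together with their supports D_beta.  R(A,K,(R_i)) is realized as   *)
(* the functions f on the disjoint union of the supports of the R_i    *)
(* whose restrictions f_i lie in R_i and such that, for some c in K,   *)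
(* f_i = c.1 for all but finitely many i.                              *)
Section BConstr.
Variables (K : fieldType) (T : wo).

Definition Pt := seq (nat + option T).
Local Notation Rw := (@ext_lt T).

Definition Bpair : option T -> (Pt -> Prop) * ((Pt -> K) -> Prop) :=
  Fix (@ext_wf T) (fun _ => ((Pt -> Prop) * ((Pt -> K) -> Prop))%type)
  (fun t rec =>
   let Dt := fun x : Pt =>
     (is_zero Rw t /\ x = [::]) \/
     (exists s (h : Rw s t), is_pred Rw s t /\
        exists m y, x = inl m :: y /\ (rec s h).1 y) \/
     (is_limit Rw t /\ exists s (h : Rw s t),
        exists y, x = inr s :: y /\ (rec s h).1 y) in
   (Dt, fun f : Pt -> K =>
     (forall x, ~ Dt x -> f x = 0) /\
     (is_zero Rw t \/
      (exists s (h : Rw s t), [/\ is_pred Rw s t,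
          (forall m : nat, (rec s h).2 (fun y => f (inl m :: y))) &
          exists (c : K) (L : seq nat), forall m, ~ List.In m L ->
             forall y, (rec s h).1 y -> f (inl m :: y) = c]) \/
      [/\ is_limit Rw t,
          (forall s (h : Rw s t), (rec s h).2 (fun y => f (inr s :: y))) &
          exists (c : K) (L : seq (option T)), forall s (h : Rw s t),
             ~ List.In s L -> forall y, (rec s h).1 y -> f (inr s :: y) = c]))).

Definition B1 : (Pt -> K) -> Prop := (Bpair None).2.

Definition Bn (n : nat) : (('I_n * Pt) -> K) -> Prop :=
  fun f => forall i : 'I_n, B1 (fun x => f (i, x)).

End BConstr.

(** The algebra [B_{a,1}] is realised as functions on the leaves of a well-founded tree:
    a node of rank [t] has one child of rank [s] for every [s < t] when [t] is a limit,
    and countably many children of rank [s] when [t = s + 1].  Every element has, at each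
    node, a germ: the constant it takes on the subtrees of almost all children (its value,
    at a leaf), and taking germs is multiplicative.  By induction on [t], the socle [S_t]
    consists of the elements whose germs vanish at every node of rank at least [t]: an
    element whose germs vanish above [t] is, modulo that ideal, a finite sum of atoms
    (scaled indicators of nodes of rank [t]), whereas an element with a nonzero germ above
    [t] splits into two orthogonal parts outside it and so lies in no minimal ideal.
    Reading off the germs at the nodes of rank [t] identifies [S_{t+1}/S_t] with
    [K^(nodes of rank t)]; the [n] roots are the only nodes of rank [a], whence the Loewy
    length [a + 1] and the top layer [K^n]. *)

From mathcomp Require Import ssreflect ssrfun ssrbool eqtype ssrnat seq choice fintype ssralg bigop.
From mathcomp Require Import ring.
From Stdlib Require Import FunctionalExtensionality PropExtensionality ClassicalEpsilon Classical.
Set Implicit Arguments. Unset Strict Implicit. Unset Printing Implicit Defensive.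
Import GRing.Theory.
Local Open Scope ring_scope.

(** * Well-orders *)

Lemma Fix_unfold (A : Type) (R : A -> A -> Prop) (wf : well_founded R)
    (P : A -> Type) (F : forall x, (forall y, R y x -> P y) -> P x) x :
  Fix wf P F x = F x (fun y _ => Fix wf P F y).
Proof.
apply: Fix_eq => y f g Efg.
have -> // : f = g.
by apply: functional_extensionality_dep => z; apply: functional_extensionality_dep.
Qed.

Section ExtOrder.
Variable T : wo.
Local Notation lt := (@ext_lt T).

Lemma ext_lt_irr x : ~ lt x x.
Proof. move=> H; induction (ext_wf T x) as [x _ IH]; exact: (IH x H H). Qed.

Lemma ext_lt_trans x y z : lt x y -> lt y z -> lt x z.
Proof.
case: x => [x|]; case: y => [y|]; case: z => [z|] //=; exact: (@ltw_trans T).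
Qed.

Lemma ext_lt_asym x y : lt x y -> ~ lt y x.
Proof. by move=> H1 H2; exact: ext_lt_irr (ext_lt_trans H1 H2). Qed.

Lemma ext_lt_total x y : lt x y \/ x = y \/ lt y x.
Proof.
case: x => [x|]; case: y => [y|] /=; try tauto.
by case: (ltw_total T x y) => [|[->|]]; tauto.
Qed.

Lemma ext_lt_ge x y : ~ lt x y -> y = x \/ lt y x.
Proof. by case: (ext_lt_total x y) => [|[->|]]; tauto. Qed.

Lemma ordinal_cases t : is_zero lt t \/ (exists s, is_pred lt s t) \/ is_limit lt t.
Proof.
case: (classic (exists s, lt s t)) => [Hs|Hn]; last first.
  by left => s Hst; apply: Hn; exists s.
by case: (classic (exists s, is_pred lt s t)) => Hp; [tauto|right; right].
Qed.

Lemma gt_nonzero s t : lt s t -> ~ is_zero lt t.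
Proof. by move=> Hst Hz; exact: Hz s Hst. Qed.

Lemma nonzero_has_lt t : ~ is_zero lt t -> exists s, lt s t.
Proof. by move=> Hz; apply: NNPP => H; apply: Hz => s Hs; apply: H; exists s. Qed.

Lemma pred_uniq s s' t : is_pred lt s t -> is_pred lt s' t -> s = s'.
Proof.
move=> [H1 H1'] [H2 H2'].
case: (H1' _ H2) => [//|H3]; case: (H2' _ H1) => [//|H4].
by case: (ext_lt_irr (ext_lt_trans H3 H4)).
Qed.

Lemma gt_pred_ge s t : is_pred lt s t -> (fun v => lt s v) = (fun v => ~ lt v t).
Proof.
move=> [Hst Hp]; apply: functional_extensionality => v; apply: propositional_extensionality.
split=> [Hsv Hvt|Hvt].
  by case: (Hp _ Hvt) => [E|H']; [subst; exact: ext_lt_irr Hsv|exact: ext_lt_asym Hsv H'].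
by case: (ext_lt_ge Hvt) => [<-|H]; [|exact: ext_lt_trans Hst H].
Qed.

Lemma limit_dense u t : is_limit lt t -> lt u t -> exists w, lt u w /\ lt w t.
Proof.
move=> [_ Hnp] Hut; apply: NNPP => Hn; apply: Hnp; exists u; split => // w Hwt.
case: (ext_lt_total w u) => [|[|Huw]]; try tauto.
by case: Hn; exists w.
Qed.

Lemma limit_upper_bound (A : Type) t (Q : A -> option T -> Prop) :
  is_limit lt t -> (forall x s s', Q x s -> lt s s' -> Q x s') ->
  forall L : list A, (forall x, List.In x L -> exists s, lt s t /\ Q x s) ->
  exists s, lt s t /\ forall x, List.In x L -> Q x s.
Proof.
move=> Hl Hm; elim=> [|x L IH] H.
  by case: Hl => [[s Hs] _]; exists s.
have [s1 [Hs1 Q1]] := IH (fun y Hy => H y (or_intror Hy)).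
have [s2 [Hs2 Q2]] := H x (or_introl erefl).
case: (ext_lt_total s1 s2) => [H12|[E|H21]].
- by exists s2; split => // y [<-//|Hy]; apply: Hm (Q1 _ Hy) H12.
- by subst; exists s2; split => // y [<-//|Hy]; exact: Q1.
- by exists s1; split => // y [<-|Hy]; [exact: Hm Q2 H21|exact: Q1].
Qed.

Lemma limit_avoid (A : Type) b t (L : list (A + option T)) :
  is_limit lt t -> lt b t -> exists s, [/\ lt b s, lt s t & ~ List.In (inr s) L].
Proof.
move=> Hl Hbt.
pose Q (x : A + option T) s := forall u, x = inr u -> lt u t -> lt u s.
have [s [Hst HQ]] : exists s, lt s t /\ forall x, List.In x (inr b :: L) -> Q x s.
  apply: limit_upper_bound => //.
    by move=> x s s' Hs Hss' u Eu Hut; exact: ext_lt_trans (Hs u Eu Hut) Hss'.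
  move=> x _; case: (classic (exists u, x = inr u /\ lt u t)) => [[u [-> Hut]]|Hx].
    by have [w [Huw Hwt]] := limit_dense Hl Hut; exists w; split => // u' [<-].
  by exists b; split => // u Eu Hut; case: Hx; exists u.
exists s; split => //; first exact: HQ (or_introl erefl) _ erefl Hbt.
by move=> Hin; exact: ext_lt_irr (HQ _ (or_intror Hin) s erefl Hst).
Qed.

End ExtOrder.

(** * Algebras of functions *)

Ltac fun_ring := apply: functional_extensionality => ?;
  cbv [fadd fopp fscale fmul f0 fsum foldr]; ring.

Section FunAlgebra.
Variables (K : fieldType) (X : Type).
Implicit Types (f g h e : X -> K) (P I M N : fpred K X).

Lemma fsum_cat (s1 s2 : seq (X -> K)) : fsum (s1 ++ s2) = fadd (fsum s1) (fsum s2).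
Proof. by elim: s1 => [|g s1 IH] /=; [fun_ring|rewrite IH; fun_ring]. Qed.

Lemma fsumE (s : seq (X -> K)) x : fsum s x = \sum_(g <- s) g x.
Proof. by elim: s => [|g s IH] /=; rewrite ?big_nil ?big_cons // /fadd IH. Qed.

Definition decomp (A Z : fpred K X) h :=
  exists gs z, [/\ (forall g, List.In g gs -> A g), Z z & h = fadd (fsum gs) z].

Lemma decomp_fsum (A Z : fpred K X) : Z f0 ->
  (forall f g, Z f -> Z g -> Z (fadd f g)) ->
  forall hs, (forall h, List.In h hs -> decomp A Z h) -> decomp A Z (fsum hs).
Proof.
move=> Z0 ZD; elim=> [|h hs IH] Hhs /=.
  by exists [::], f0; split => //; fun_ring.
have [gs1 [z1 [H1 Hz1 ->]]] := Hhs h (or_introl erefl).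
have [gs2 [z2 [H2 Hz2 E2]]] := IH (fun h H => Hhs h (or_intror H)).
exists (gs1 ++ gs2), (fadd z1 z2); split; last by rewrite E2 fsum_cat; fun_ring.
- by move=> g Hg; case: (List.in_app_or _ _ _ Hg) => ?; [exact: H1|exact: H2].
- exact: ZD.
Qed.

Section Ideals.
Variable P : fpred K X.
Hypothesis HP : is_falg P.

Section Ideal.
Variable I : fpred K X.
Hypothesis HI : is_ideal P I.

Lemma idealP f : I f -> P f. Proof. by case: HI => H _ _ _ _; apply: H. Qed.
Lemma ideal0 : I f0. Proof. by case: HI. Qed.
Lemma idealD f g : I f -> I g -> I (fadd f g). Proof. by case: HI => _ _ H _ _; apply: H. Qed.
Lemma idealN f : I f -> I (fopp f). Proof. by case: HI => _ _ _ H _; apply: H. Qed.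
Lemma idealM r f : P r -> I f -> I (fmul r f). Proof. by case: HI => _ _ _ _ H; apply: H. Qed.

Lemma idealMr r f : P r -> I f -> I (fmul f r).
Proof.
move=> Hr Hf; have -> : fmul f r = fmul r f by fun_ring.
exact: idealM.
Qed.

Lemma idealB f g : I f -> I g -> I (fadd f (fopp g)).
Proof. by move=> Hf Hg; apply: idealD => //; exact: idealN. Qed.

Lemma idealZ k f : I f -> I (fscale k f).
Proof.
move=> Hf; case: HP => _ [_ _ _ PZ [e [Pe He]]].
have <- : fmul (fscale k e) f = fscale k f by rewrite -{2}(He _ (idealP Hf)); fun_ring.
by apply: idealM => //; exact: PZ.
Qed.

End Ideal.

Section Atoms.
Variable I : fpred K X.
Hypothesis HI : is_ideal P I.

(** [g] is an atom over [I] when [P g] is one-dimensional modulo [I]. *)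
Definition atom g := [/\ P g, ~ I g &
  forall r, P r -> exists k, I (fadd (fmul r g) (fopp (fscale k g)))].

Definition line g : fpred K X := fun h => P h /\ exists k, I (fadd h (fopp (fscale k g))).

Lemma line_ideal g : atom g -> is_ideal P (line g).
Proof.
case: HP => P0 [PD PN PM _ _] [Pg _ Hat]; split.
- by move=> f [].
- split => //; exists 0; have -> : fadd f0 (fopp (fscale 0 g)) = f0 by fun_ring.
  exact: (ideal0 HI).
- move=> f h [Pf [k1 H1]] [Ph [k2 H2]]; split; first exact: PD.
  exists (k1 + k2).
  have -> : fadd (fadd f h) (fopp (fscale (k1 + k2) g)) =
            fadd (fadd f (fopp (fscale k1 g))) (fadd h (fopp (fscale k2 g))) by fun_ring.
  exact: (idealD HI H1 H2).
- move=> f [Pf [k H]]; split; first exact: PN.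
  exists (- k).
  have -> : fadd (fopp f) (fopp (fscale (- k) g)) = fopp (fadd f (fopp (fscale k g))) by fun_ring.
  exact: (idealN HI H).
- move=> r f Pr [Pf [k H]]; split; first exact: PM.
  have [kr Hkr] := Hat r Pr; exists (k * kr).
  have -> : fadd (fmul r f) (fopp (fscale (k * kr) g)) =
     fadd (fmul r (fadd f (fopp (fscale k g))))
          (fscale k (fadd (fmul r g) (fopp (fscale kr g)))) by fun_ring.
  exact: (idealD HI (idealM HI Pr H) (idealZ HI _ Hkr)).
Qed.

Lemma line_self g : P g -> line g g.
Proof.
move=> Pg; split => //; exists 1.
have -> : fadd g (fopp (fscale 1 g)) = f0 by fun_ring.
exact: (ideal0 HI).
Qed.

Lemma atom_minimal g : atom g -> minimal_over P I (line g).
Proof.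
move=> Hg; have [Pg nIg _] := Hg; split; first exact: line_ideal.
- move=> f If; split; first exact: (idealP HI If).
  by exists 0; have -> : fadd f (fopp (fscale 0 g)) = f by fun_ring.
- by exists g; split => //; exact: line_self.
move=> N HN HIN HNg; case: (classic (fsubset N I)) => HNI.
  by left => f; split; [exact: HNI|exact: HIN].
right; have [h [Nh nIh]] : exists h, N h /\ ~ I h.
  apply: NNPP => H; apply: HNI => f Nf; apply: NNPP => nIf; apply: H; by exists f.
have [_ [k Hk]] := HNg _ Nh.
have k0 : k != 0.
  apply/negP => /eqP k0; subst k; apply: nIh.
  by have <- : fadd h (fopp (fscale 0 g)) = h by fun_ring.
have Ng : N g.
  have -> : g = fscale k^-1 (fadd h (fopp (fadd h (fopp (fscale k g))))).
    apply: functional_extensionality => x; cbv [fadd fopp fscale].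
    by rewrite opprD opprK addrA subrr add0r mulrA mulVf // mul1r.
  by apply: (idealZ HN); apply: (idealB HN) => //; exact: HIN.
move=> f; split; first exact: HNg.
move=> [_ [kf Hkf]].
have -> : f = fadd (fadd f (fopp (fscale kf g))) (fscale kf g) by fun_ring.
by apply: (idealD HN); [exact: HIN|exact: (idealZ HN)].
Qed.

Lemma atom_in_minimal g : atom g -> exists M, minimal_over P I M /\ M g.
Proof.
move=> Hg; exists (line g); split; first exact: atom_minimal.
by case: Hg => Pg _ _; exact: line_self.
Qed.

Lemma fixed_ideal M e : is_ideal P M -> P e ->
  is_ideal P (fun h => M h /\ I (fadd h (fopp (fmul h e)))).
Proof.
move=> HM Pe; split.
- by move=> f [Mf _]; exact: (idealP HM Mf).
- split; first exact: (ideal0 HM).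
  have -> : fadd f0 (fopp (fmul f0 e)) = f0 by fun_ring.
  exact: (ideal0 HI).
- move=> f h [Mf If] [Mh Ih]; split; first exact: (idealD HM Mf Mh).
  have -> : fadd (fadd f h) (fopp (fmul (fadd f h) e)) =
     fadd (fadd f (fopp (fmul f e))) (fadd h (fopp (fmul h e))) by fun_ring.
  exact: (idealD HI If Ih).
- move=> f [Mf If]; split; first exact: (idealN HM Mf).
  have -> : fadd (fopp f) (fopp (fmul (fopp f) e)) = fopp (fadd f (fopp (fmul f e))) by fun_ring.
  exact: (idealN HI If).
- move=> r f Pr [Mf If]; split; first exact: (idealM HM Pr Mf).
  have -> : fadd (fmul r f) (fopp (fmul (fmul r f) e)) =
            fmul r (fadd f (fopp (fmul f e))) by fun_ring.
  exact: (idealM HI Pr If).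
Qed.

Lemma minimal_orthogonal M g e1 e2 : minimal_over P I M -> M g -> P e1 -> P e2 ->
  (forall x, e1 x * e1 x = e1 x /\ e1 x * e2 x = 0) ->
  I (fmul g e1) \/ I (fmul g e2).
Proof.
move=> [HM HIM _ Hmin] Mg Pe1 Pe2 He.
have Mge i : P i -> M (fmul g i) by move=> Pi; exact: (idealMr HM Pi Mg).
case: (Hmin _ (fixed_ideal HM Pe1)) => [f If|f [] //|HNI|HNM].
- split; first exact: HIM.
  exact: (idealB HI If (idealMr HI Pe1 If)).
- left; apply/(HNI _); split; first exact: Mge.
  have -> : fadd (fmul g e1) (fopp (fmul (fmul g e1) e1)) = f0.
    apply: functional_extensionality => x; cbv [fadd fopp fmul f0].
    by rewrite -mulrA (proj1 (He x)) subrr.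
  exact: (ideal0 HI).
- right; have [_ H] := proj2 (HNM _) (Mge _ Pe2).
  have <- // : fadd (fmul g e2) (fopp (fmul (fmul g e2) e1)) = fmul g e2.
  apply: functional_extensionality => x; cbv [fadd fopp fmul].
  by rewrite -mulrA (mulrC (e2 x)) (proj2 (He x)) mulr0 subr0.
Qed.

Lemma soc_next_sub J : is_ideal P J -> fsubset I J ->
  (forall M, minimal_over P I M -> fsubset M J) -> fsubset (soc_next P I) J.
Proof.
move=> HJ HIJ HMJ f [Pf [gs [Hgs Hr]]].
have Js : J (fsum gs).
  elim: gs Hgs {Hr} => [|g gs IH] Hgs /=; first exact: (ideal0 HJ).
  apply: (idealD HJ); last by apply: IH => g' Hg'; apply: Hgs; right.
  by have [M [HM Mg]] := Hgs g (or_introl erefl); exact: HMJ HM _ Mg.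
have -> : f = fadd (fadd f (fopp (fsum gs))) (fsum gs) by fun_ring.
by apply: (idealD HJ) => //; exact: HIJ.
Qed.

Lemma decomp_soc_next f : P f -> decomp atom I f -> soc_next P I f.
Proof.
move=> Pf [gs [z [Hgs Hz E]]]; split => //; exists gs; split.
  by move=> g Hg; exact: atom_in_minimal (Hgs _ Hg).
by have -> : fadd f (fopp (fsum gs)) = z by rewrite E; fun_ring.
Qed.

End Atoms.
End Ideals.
End FunAlgebra.

Lemma fsum_map (K : fieldType) (X Y : Type) (F : (X -> K) -> (Y -> K)) :
  F f0 = f0 -> (forall f g, F (fadd f g) = fadd (F f) (F g)) ->
  forall gs, F (fsum gs) = fsum (map F gs).
Proof. by move=> F0 FD; elim=> [|g gs IH] //=; rewrite FD IH. Qed.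

Lemma decomp_map (K : fieldType) (X Y : Type) (F : (X -> K) -> (Y -> K))
    (A Z : fpred K X) (A' Z' : fpred K Y) h :
  F f0 = f0 -> (forall f g, F (fadd f g) = fadd (F f) (F g)) ->
  (forall g, A g -> A' (F g)) -> (forall z, Z z -> Z' (F z)) ->
  decomp A Z h -> decomp A' Z' (F h).
Proof.
move=> F0 FD HA HZ [gs [z [Hgs Hz ->]]].
exists (map F gs), (F z); split; last by rewrite FD (fsum_map F0 FD).
- by move=> g /List.in_map_iff [g' [<- Hg']]; exact: HA (Hgs _ Hg').
- exact: HZ.
Qed.

(** * The trees underlying [B_{a,1}] *)

Section Tree.
Variables (K : fieldType) (T : wo).
Local Notation lt := (@ext_lt T).
Local Notation Pt := (Pt T).
Local Notation lab := (nat + option T)%type.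

(** [supp a] is the set of leaves of the tree of rank [a], and [B a] is [B_{a,1}]. *)
Definition supp a := (Bpair K T a).1.
Definition B a := (Bpair K T a).2.

(** The edge labelled [l] leads from the root of the tree of rank [a] to a subtree of
    rank [s]. *)
Definition child a (l : lab) s :=
  (is_pred lt s a /\ exists m, l = inl m) \/ (is_limit lt a /\ l = inr s /\ lt s a).

Lemma child_lt a l s : child a l s -> lt s a.
Proof. by case=> [[[]]|[_ []]]. Qed.

Lemma child_uniq a l s s' : child a l s -> child a l s' -> s = s'.
Proof.
case=> [[H1 [m ->]]|[_ [-> _]]]; case=> [[H2 [m' E]]|[_ [E _]]] //.
- exact: pred_uniq H1 H2.
- by case: E.
Qed.

Lemma child_nonzero a l s : child a l s -> ~ is_zero lt a.
Proof. by move=> /child_lt H Hz; apply: (Hz s). Qed.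

Definition fresh_nat (L : list lab) :=
  (foldr (fun l acc => if l is inl m then m + acc else acc) 0 L).+1%N.

Lemma fresh_nat_notin L : ~ List.In (inl (fresh_nat L)) L.
Proof.
suff H m : List.In (inl m) L -> (m < fresh_nat L)%N by move=> /H; rewrite ltnn.
elim: L => [//|x L IH] /= [E|Hin]; first by subst x; rewrite ltnS leq_addr.
have := IH Hin; rewrite /fresh_nat /=; case: x => [k|u] //= H.
by apply: leq_trans H _; rewrite ltnS leq_addl.
Qed.

Lemma child_avoid a b (L : list lab) : lt b a ->
  exists l s, [/\ child a l s, ~ List.In l L & ~ lt s b].
Proof.
move=> Hba; case: (ordinal_cases a) => [Hz|[[s Hp]|Hl]].
- by case: (Hz b).
- exists (inl (fresh_nat L)), s; split; [left; split=> //; by eexists|exact: fresh_nat_notin|].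
  move=> Hsb; case: Hp => [_ Hp]; case: (Hp _ Hba) => [E|H].
  + by subst; exact: ext_lt_irr Hsb.
  + exact: ext_lt_asym H Hsb.
- have [s [H1 H2 H3]] := limit_avoid L Hl Hba.
  by exists (inr s), s; split => //; [right|exact: ext_lt_asym].
Qed.

Lemma supp_unfold a x : supp a x <->
  (is_zero lt a /\ x = [::]) \/ exists l s y, [/\ child a l s, x = l :: y & supp s y].
Proof.
rewrite /supp /Bpair Fix_unfold /=; split.
- case=> [H|[[s [h [Hp [m [y [-> Hy]]]]]]|[Hl [s [h [y [-> Hy]]]]]]]; [by left|right|right].
  + by exists (inl m), s, y; split => //; left; split => //; exists m.
  + by exists (inr s), s, y; split => //; right.
- case=> [H|[l [s [y [[[Hp [m ->]]|[Hl [-> Hsa]]] -> Hy]]]]]; [by left|right; left|right; right].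
  + by exists s, (proj1 Hp); split => //; exists m, y.
  + by split => //; exists s, Hsa, y.
Qed.

Lemma supp_child a l s y : child a l s -> (supp a (l :: y) <-> supp s y).
Proof.
move=> Hc; rewrite supp_unfold; split.
- case=> [[_ //]|[l' [s' [y' [Hc' [El Ey] Hy]]]]]; subst l' y'.
  by rewrite (child_uniq Hc Hc').
- by move=> Hy; right; exists l, s, y.
Qed.

Lemma supp_nil a : ~ is_zero lt a -> ~ supp a [::].
Proof. by move=> Hz /supp_unfold [[]|[l [s [y []]]]]. Qed.

Lemma supp_zero a : is_zero lt a -> supp a [::].
Proof. by move=> Hz; apply/supp_unfold; left. Qed.

Lemma supp_exists a : exists y, supp a y.
Proof.
induction (ext_wf T a) as [a _ IH].
case: (classic (is_zero lt a)) => Hz; first by exists [::]; exact: supp_zero.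
have [b Hb] := nonzero_has_lt Hz.
have [l [s [Hc _ _]]] := child_avoid [::] Hb.
have [y Hy] := IH s (child_lt Hc).
by exists (l :: y); apply/(supp_child _ Hc).
Qed.

Lemma B_unfold a g : B a g <->
  (forall x, ~ supp a x -> g x = 0) /\
  (is_zero lt a \/
   (exists s, lt s a /\ [/\ is_pred lt s a,
      (forall m : nat, B s (fun y => g (inl m :: y))) &
      exists (c : K) (L : seq nat), forall m, ~ List.In m L ->
          forall y, supp s y -> g (inl m :: y) = c]) \/
   [/\ is_limit lt a,
      (forall s, lt s a -> B s (fun y => g (inr s :: y))) &
      exists (c : K) (L : seq (option T)), forall s, lt s a ->
          ~ List.In s L -> forall y, supp s y -> g (inr s :: y) = c]).
Proof.
rewrite /B /supp /Bpair Fix_unfold /=.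
split => [[Hv Hc]|[Hv Hc]]; split => //.
- case: Hc => [Hz|[[s [h [Hp Hch Hcst]]]|[Hl Hch [c [L Hcst]]]]];
    [by left|right; left|right; right].
  + by exists s.
  + by split => //; exists c, L => s h; exact: Hcst.
- case: Hc => [Hz|[[s [h [Hp Hch Hcst]]]|[Hl Hch [c [L Hcst]]]]];
    [by left|right; left|right; right].
  + by exists s, h.
  + by split => //; exists c, L => s h; exact: Hcst.
Qed.

Definition germ a (g : Pt -> K) c :=
  (is_zero lt a /\ g [::] = c) \/
  (~ is_zero lt a /\ exists L : list lab, forall l s, child a l s ->
      ~ List.In l L -> forall y, supp s y -> g (l :: y) = c).

Lemma B_children_germ a g : B a g ->
  (forall l s, child a l s -> B s (fun y => g (l :: y))) /\ exists c, germ a g c.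
Proof.
case/B_unfold=> _ [Hz|[[s [h [Hp Hch [c [L Hc]]]]]|[Hl Hch [c [L Hc]]]]].
- by split; [move=> l s /child_nonzero|exists (g [::]); left].
- split=> [l s' [[Hp' [m ->]]|[[_ Hnp] _]]|]; first by rewrite (pred_uniq Hp' Hp).
    by case: Hnp; exists s.
  have Hc0 : child a (inl 0%N) s by left; split => //; exists 0%N.
  exists c; right; split; first exact: child_nonzero Hc0.
  exists (map inl L) => l s' [[Hp' [m ->]]|[[_ Hnp] _]] Hin y Hy.
  + rewrite (pred_uniq Hp' Hp) in Hy; apply: Hc Hy => Hm; apply: Hin.
    exact: List.in_map.
  + by case: Hnp; exists s.
- split=> [l s [[Hp _]|[_ [-> Hsa]]]|]; [by case: Hl => _ []; exists s|exact: Hch|].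
  exists c; right; split; first by case: Hl => [[s Hs] _] Hz; apply: (Hz s).
  exists (map inr L) => l s [[Hp _]|[_ [-> Hsa]]] Hin y Hy.
  + by case: Hl => _ []; exists s.
  + by apply: Hc Hy => // Hm; apply: Hin; exact: List.in_map.
Qed.

Lemma B_of_children_germ a g c : (forall x, ~ supp a x -> g x = 0) ->
  (forall l s, child a l s -> B s (fun y => g (l :: y))) -> germ a g c -> B a g.
Proof.
move=> Hv Hch Hc; apply/B_unfold; split => //.
case: (ordinal_cases a) => [Hz|[[s Hp]|Hl]]; [by left|right; left|right; right].
- have Hc' m : child a (inl m) s by left; split => //; exists m.
  exists s; split; first exact: (proj1 Hp).
  split => //; first by move=> m; exact: Hch (Hc' m).
  case: Hc => [[Hz _]|[_ [L HL]]]; first by case: (Hz s (proj1 Hp)).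
  pose nat_of (l : lab) := if l is inl m then m else 0%N.
  exists c, (map nat_of L) => m Hm y Hy.
  by apply: (HL _ _ (Hc' m)) Hy => H; apply: Hm; exact: (List.in_map nat_of _ _ H).
- have Hc' s : lt s a -> child a (inr s) s by move=> Hs; right.
  split => //; first by move=> s Hs; exact: Hch (Hc' s Hs).
  case: Hc => [[Hz _]|[_ [L HL]]]; first by case: Hl => [[s Hs] _]; case: (Hz s).
  pose rank_of (l : lab) := if l is inr s then s else None.
  exists c, (map rank_of L) => s Hs Hm y Hy.
  by apply: (HL _ _ (Hc' s Hs)) Hy => H; apply: Hm; exact: (List.in_map rank_of _ _ H).
Qed.

Lemma B_char a g : B a g <->
  [/\ (forall x, ~ supp a x -> g x = 0),
      (forall l s, child a l s -> B s (fun y => g (l :: y))) &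
      exists c, germ a g c].
Proof.
split=> [Hg|[Hv Hch [c Hc]]]; last exact: B_of_children_germ Hc.
by have [Hch Hc] := B_children_germ Hg; split => //; case/B_unfold: Hg.
Qed.

Lemma germ_uniq a g c d : germ a g c -> germ a g d -> c = d.
Proof.
case=> [[Hz <-]|[Hz [L1 H1]]]; case=> [[Hz' <-]|[Hz' [L2 H2]]]; try tauto.
have [b Hb] := nonzero_has_lt Hz.
have [l [s [Hc Hin _]]] := child_avoid (L1 ++ L2) Hb.
have [y Hy] := supp_exists s.
rewrite -(H1 _ _ Hc _ _ Hy) ?(H2 _ _ Hc _ _ Hy) // => H; apply: Hin.
all: by apply: List.in_or_app; tauto.
Qed.

Lemma germ_op (op : K -> K -> K) a g h c d : germ a g c -> germ a h d ->
  germ a (fun x => op (g x) (h x)) (op c d).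
Proof.
case=> [[Hz E1]|[Hz [L1 H1]]]; case=> [[Hz' E2]|[Hz' [L2 H2]]]; try tauto.
  by left; split => //; rewrite E1 E2.
right; split => //; exists (L1 ++ L2) => l s Hc Hin y Hy.
rewrite (H1 _ _ Hc _ _ Hy) ?(H2 _ _ Hc _ _ Hy) // => H; apply: Hin.
all: by apply: List.in_or_app; tauto.
Qed.

Lemma eq_germ a g h c : (forall x, supp a x -> g x = h x) -> germ a g c -> germ a h c.
Proof.
move=> E; case=> [[Hz E1]|[Hz [L1 H1]]].
  by left; split => //; rewrite -E ?E1 //; exact: supp_zero.
right; split => //; exists L1 => l s Hc Hin y Hy; rewrite -E; first exact: H1 Hy.
by apply/(supp_child _ Hc).
Qed.

Lemma germ_cst a c : germ a (fun _ => c) c.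
Proof. by case: (classic (is_zero lt a)) => Hz; [left|right; split => //; exists [::]]. Qed.

Lemma germ_supp0 a g c : (forall x, supp a x -> g x = 0) -> germ a g c -> c = 0.
Proof. by move=> E Hc; apply: (germ_uniq Hc); apply: eq_germ (germ_cst a 0) => x /E ->. Qed.

Lemma germ_exists a g : B a g -> exists c, germ a g c.
Proof. by case/B_char. Qed.

Lemma B_out a g x : B a g -> ~ supp a x -> g x = 0.
Proof. by case/B_char => H _ _; apply: H. Qed.

Lemma B_child a g l s : B a g -> child a l s -> B s (fun y => g (l :: y)).
Proof. by case/B_char => _ H _; apply: H. Qed.

Lemma B_op (op : K -> K -> K) a g h : op 0 0 = 0 -> B a g -> B a h ->
  B a (fun x => op (g x) (h x)).
Proof.
move=> op0; induction (ext_wf T a) as [a _ IH] in g, h |- * => Hg Hh.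
have [Hg1 Hg2 [c Hc]] := proj1 (B_char a g) Hg.
have [Hh1 Hh2 [d Hd]] := proj1 (B_char a h) Hh.
apply/B_char; split.
- by move=> x Hx; rewrite Hg1 // Hh1.
- by move=> l s Hc'; exact: (IH s (child_lt Hc') _ _ (Hg2 _ _ Hc') (Hh2 _ _ Hc')).
- by exists (op c d); exact: germ_op.
Qed.

Definition Bone a : Pt -> K := fun x => if excluded_middle_informative (supp a x) then 1 else 0.

Lemma Bone_in a x : supp a x -> Bone a x = 1.
Proof. by rewrite /Bone; case: excluded_middle_informative. Qed.

Lemma Bone_out a x : ~ supp a x -> Bone a x = 0.
Proof. by rewrite /Bone; case: excluded_middle_informative. Qed.

Lemma Bone_idem a x : Bone a x * Bone a x = Bone a x.
Proof. by rewrite /Bone; case: excluded_middle_informative => Hx; rewrite ?mulr1 ?mulr0. Qed.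

Lemma Bone_child a l s : child a l s -> (fun y => Bone a (l :: y)) = Bone s.
Proof.
move=> Hc; apply: functional_extensionality => y.
case: (classic (supp s y)) => Hy.
- by rewrite !Bone_in //; apply/(supp_child _ Hc).
- by rewrite !Bone_out // => /(supp_child _ Hc).
Qed.

Lemma germ_Bone a : germ a (Bone a) 1.
Proof.
case: (classic (is_zero lt a)) => Hz.
- by left; split => //; apply: Bone_in; exact: supp_zero.
- by right; split => //; exists [::] => l s Hc _ y Hy; apply: Bone_in; apply/(supp_child _ Hc).
Qed.

Lemma B_Bone a : B a (Bone a).
Proof.
induction (ext_wf T a) as [a _ IH]; apply/B_char; split.
- exact: Bone_out.
- by move=> l s Hc; rewrite (Bone_child Hc); exact: IH (child_lt Hc).
- by exists 1; exact: germ_Bone.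
Qed.

Lemma B0 a : B a (fun _ => 0).
Proof. exact: (B_op (op := fun _ _ => 0) _ (B_Bone a) (B_Bone a)). Qed.

Lemma Bone_mul a g : B a g -> (fun x => Bone a x * g x) = g.
Proof.
move=> Hg; apply: functional_extensionality => x.
case: (classic (supp a x)) => Hx; first by rewrite Bone_in // mul1r.
by rewrite (B_out Hg Hx) mulr0.
Qed.

(** The path [p] leads from the root of the tree of rank [a] to a node of rank [t]. *)
Inductive node : option T -> Pt -> option T -> Prop :=
| node_root a : node a [::] a
| node_cons a l s p t : child a l s -> node s p t -> node a (l :: p) t.

Lemma node_le a p t : node a p t -> t = a \/ lt t a.
Proof.
elim=> [b|b l s q u Hc _ [E|H]]; [by left|right|right].
- by subst; exact: child_lt Hc.
- exact: ext_lt_trans H (child_lt Hc).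
Qed.

Lemma node_nil a t : node a [::] t -> t = a.
Proof. by move=> H; inversion H. Qed.

Lemma node_root_only a p t : node a p t -> ~ lt t a -> p = [::] /\ t = a.
Proof.
case: p => [|l p] Hn Ht; first by rewrite (node_nil Hn).
inversion Hn as [|b l' s q u Hc Hn']; subst.
case: Ht; case: (node_le Hn') => [->|H]; first exact: child_lt Hc.
exact: ext_lt_trans H (child_lt Hc).
Qed.

Lemma node_uniq a p t t' : node a p t -> node a p t' -> t = t'.
Proof.
move=> H; elim: H t' => [b|b l s q u Hc _ IH] t' H'; first exact: (esym (node_nil H')).
inversion H' as [|b' l' s' q' u' Hc' Hn']; subst; apply: IH.
by rewrite (child_uniq Hc Hc').
Qed.

Lemma B_node a p t g : node a p t -> B a g -> B t (fun y => g (p ++ y)).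
Proof. by move=> H; elim: H g => [//|b l s q u Hc _ IH] g Hg; exact: (IH _ (B_child Hg Hc)). Qed.

Lemma supp_node a p t y : node a p t -> supp t y -> supp a (p ++ y).
Proof.
move=> H; elim: H y => [//|b l s q u Hc _ IH] y Hy /=.
by apply/(supp_child _ Hc); exact: IH.
Qed.

Lemma node_exists a b : b = a \/ lt b a -> exists p, node a p b.
Proof.
induction (ext_wf T a) as [a _ IH] => [[->|Hba]]; first by exists [::]; constructor.
have [l [s [Hc _ Hsb]]] := child_avoid [::] Hba.
have [p Hp] : exists p, node s p b by apply: IH; [exact: child_lt Hc|exact: ext_lt_ge].
by exists (l :: p); exact: node_cons Hc Hp.
Qed.

Lemma leaf_node a x : supp a x -> exists t, node a x t /\ is_zero lt t.
Proof.
elim: x a => [|l x IH] a /supp_unfold [[Hz E]|[l' [s [y [Hc E Hy]]]]] //.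
  by exists a; split => //; constructor.
case: E => El Ey; subst l' y; have [t [H1 H2]] := IH _ Hy.
by exists t; split => //; exact: node_cons Hc H1.
Qed.

(** * Germs at the nodes and the ideals defined by their vanishing *)

Definition germs_vanish a (C : option T -> Prop) (g : Pt -> K) :=
  forall p t c, node a p t -> C t -> germ t (fun y => g (p ++ y)) c -> c = 0.

Definition vanish a C : fpred K Pt := fun g => B a g /\ germs_vanish a C g.

Lemma germs_vanish_unfold a C g : germs_vanish a C g <->
  (C a -> forall c, germ a g c -> c = 0) /\
  forall l s, child a l s -> germs_vanish s C (fun y => g (l :: y)).
Proof.
split=> [H|[H1 H2] p t c Hn].
  split=> [Ca c Hc|l s Hc p t c Hn]; first exact: (H [::] a c (node_root a) Ca Hc).
  exact: (H (l :: p) t c (node_cons Hc Hn)).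
inversion Hn as [b|b l s q u Hc Hn']; subst; first by move=> Ca Hc; exact: H1 Ca _ Hc.
exact: (H2 _ _ Hc q t c Hn').
Qed.

Lemma germs_vanish_root a C g c : germs_vanish a C g -> C a -> germ a g c -> c = 0.
Proof. by move=> /germs_vanish_unfold [H _] Ca; exact: H Ca c. Qed.

Lemma germs_vanish_child a C g l s : germs_vanish a C g -> child a l s ->
  germs_vanish s C (fun y => g (l :: y)).
Proof. by move=> /germs_vanish_unfold [_ H]; apply: H. Qed.

Lemma germs_vanish_sub a (C C' : option T -> Prop) g : (forall t, C t -> C' t) ->
  germs_vanish a C' g -> germs_vanish a C g.
Proof. by move=> HC H p t c Hn Ct; exact: H Hn (HC _ Ct). Qed.

Lemma germs_vanish_supp0 a C g : (forall x, supp a x -> g x = 0) -> germs_vanish a C g.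
Proof. by move=> H p t c Hn _; apply: germ_supp0 => y Hy; apply: H; exact: supp_node Hn Hy. Qed.

Lemma germ_node a p t g : node a p t -> B a g -> exists c, germ t (fun y => g (p ++ y)) c.
Proof. by move=> Hn Hg; apply: germ_exists; exact: B_node Hn Hg. Qed.

Lemma germs_vanish_op (op : K -> K -> K) a C g h : op 0 0 = 0 -> B a g -> B a h ->
  germs_vanish a C g -> germs_vanish a C h -> germs_vanish a C (fun x => op (g x) (h x)).
Proof.
move=> op0 Hg Hh Ng Nh p t c Hn Ct Hc.
have [c1 H1] := germ_node Hn Hg; have [c2 H2] := germ_node Hn Hh.
rewrite (germ_uniq Hc (germ_op op H1 H2)).
by rewrite (Ng _ _ _ Hn Ct H1) (Nh _ _ _ Hn Ct H2).
Qed.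

Lemma germs_vanish_mull a C r g : B a r -> B a g ->
  germs_vanish a C g -> germs_vanish a C (fun x => r x * g x).
Proof.
move=> Hr Hg Ng p t c Hn Ct Hc.
have [c1 H1] := germ_node Hn Hr; have [c2 H2] := germ_node Hn Hg.
rewrite (germ_uniq Hc (germ_op *%R H1 H2)).
by rewrite (Ng _ _ _ Hn Ct H2) mulr0.
Qed.

Lemma vanish_child a C g l s : vanish a C g -> child a l s -> vanish s C (fun y => g (l :: y)).
Proof. by move=> [Hg Ng] Hc; split; [exact: B_child Hg Hc|exact: germs_vanish_child Ng Hc]. Qed.

Lemma vanish0 a C : vanish a C (fun _ => 0).
Proof. by split; [exact: B0|exact: germs_vanish_supp0]. Qed.

Lemma vanishD a C f g : vanish a C f -> vanish a C g -> vanish a C (fadd f g).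
Proof.
move=> [Hf Nf] [Hg Ng]; split.
- exact: (B_op (op := +%R)) (addr0 _) Hf Hg.
- exact: (germs_vanish_op (op := +%R)) (addr0 _) Hf Hg Nf Ng.
Qed.

Definition graft (l : lab) (h : Pt -> K) : Pt -> K := fun x =>
  if x is l' :: y then if excluded_middle_informative (l' = l) then h y else 0 else 0.

Lemma graft_eq l h y : graft l h (l :: y) = h y.
Proof. by rewrite /graft; case: excluded_middle_informative. Qed.

Lemma graft_ne l l' h y : l' <> l -> graft l h (l' :: y) = 0.
Proof. by rewrite /graft; case: excluded_middle_informative. Qed.

Lemma graft_child l h : (fun y => graft l h (l :: y)) = h.
Proof. by apply: functional_extensionality => y; exact: graft_eq. Qed.

Lemma graft_child_ne l l' h : l' <> l -> (fun y => graft l h (l' :: y)) = (fun _ => 0).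
Proof. by move=> H; apply: functional_extensionality => y; exact: graft_ne. Qed.

Lemma graft0 l : graft l f0 = f0.
Proof. by apply: functional_extensionality => [[|l' y]] //=; case: excluded_middle_informative. Qed.

Lemma graftD l f g : graft l (fadd f g) = fadd (graft l f) (graft l g).
Proof.
apply: functional_extensionality => [[|l' y]]; rewrite /fadd /=; first by rewrite addr0.
by case: excluded_middle_informative => E; rewrite ?addr0.
Qed.

Lemma germ_graft a l s h : child a l s -> germ a (graft l h) 0.
Proof.
move=> Hc; right; split; first exact: child_nonzero Hc.
by exists [:: l] => l' s' _ Hin y _; apply: graft_ne => E; apply: Hin; left.
Qed.

Lemma B_graft a l s h : child a l s -> B s h -> B a (graft l h).
Proof.
move=> Hc Hh; apply/B_char; split.
- case=> [//|l' y] Hn /=; case: excluded_middle_informative => // E; subst l'.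
  by apply: B_out Hh _ => Hy; apply: Hn; apply/(supp_child _ Hc).
- move=> l' s' Hc'; case: (classic (l' = l)) => E.
  + by subst; rewrite graft_child (child_uniq Hc' Hc).
  + by rewrite graft_child_ne //; exact: B0.
- by exists 0; exact: germ_graft Hc.
Qed.

Lemma vanish_graft a C l s h : child a l s -> vanish s C h -> vanish a C (graft l h).
Proof.
move=> Hc [Hh Nh]; split; first exact: B_graft Hc Hh.
apply/germs_vanish_unfold; split=> [_ c Hv|l' s' Hc']; first exact: germ_uniq Hv (germ_graft _ Hc).
case: (classic (l' = l)) => E.
- by subst; rewrite graft_child (child_uniq Hc' Hc).
- by rewrite graft_child_ne //; exact: germs_vanish_supp0.
Qed.

Lemma atom_graft a C l s h : child a l s ->
  atom (B s) (vanish s C) h -> atom (B a) (vanish a C) (graft l h).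
Proof.
move=> Hc [Hb Hz Ha]; split; first exact: B_graft Hc Hb.
  by move=> H; apply: Hz; have := vanish_child H Hc; rewrite graft_child.
move=> r Hr; have [k Hk] := Ha _ (B_child Hr Hc); exists k.
have -> : fadd (fmul r (graft l h)) (fopp (fscale k (graft l h))) =
          graft l (fun y => r (l :: y) * h y - k * h y).
  apply: functional_extensionality => [[|l' y]] /=; cbv [fadd fmul fopp fscale graft].
    by rewrite !mulr0 subrr.
  by case: excluded_middle_informative => E; [subst|rewrite !mulr0 subrr].
exact: vanish_graft Hc Hk.
Qed.

Fixpoint prune (A : Type) (Q : A -> Prop) (L : list A) : list A :=
  if L is x :: L then
    if excluded_middle_informative (Q x /\ ~ List.In x L) then x :: prune Q L else prune Q L
  else [::].

Lemma prune_In (A : Type) (Q : A -> Prop) L x : List.In x (prune Q L) <-> List.In x L /\ Q x.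
Proof.
elim: L => [|y L IH] /=; first tauto.
case: excluded_middle_informative => [[Qy Hy]|Hn] /=; rewrite IH; split; try tauto.
  by case=> [<-|[]]; tauto.
case=> [[E|H] Qx]; last tauto.
by subst; split => //; apply: NNPP => H; apply: Hn.
Qed.

Lemma prune_NoDup (A : Type) (Q : A -> Prop) L : List.NoDup (prune Q L).
Proof.
elim: L => [|y L IH] /=; first constructor.
by case: excluded_middle_informative => [[Qy Hy]|_] //; constructor => // /prune_In [].
Qed.

Lemma fsum_graft_nil (L : list lab) (hh : lab -> Pt -> K) :
  fsum (map (fun l => graft l (hh l)) L) [::] = 0.
Proof. by elim: L => [//|l L IH] /=; rewrite /fadd IH addr0. Qed.

Lemma fsum_graft_out (L : list lab) (hh : lab -> Pt -> K) l0 y :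
  ~ List.In l0 L -> fsum (map (fun l => graft l (hh l)) L) (l0 :: y) = 0.
Proof.
elim: L => [//|l L IH] Hin /=; rewrite /fadd graft_ne ?add0r.
- by apply: IH => H; apply: Hin; right.
- by move=> E; apply: Hin; left.
Qed.

Lemma fsum_graft_in (L : list lab) (hh : lab -> Pt -> K) l0 y :
  List.NoDup L -> List.In l0 L ->
  fsum (map (fun l => graft l (hh l)) L) (l0 :: y) = hh l0 y.
Proof.
elim: L => [//|l L IH] Hnd /= Hin; rewrite /fadd.
inversion Hnd as [|l' L' Hl HL]; subst.
case: Hin => [E|Hin]; first by subst; rewrite graft_eq fsum_graft_out // addr0.
by rewrite graft_ne ?add0r; [exact: IH|move=> E; subst].
Qed.

Lemma B_children_sum a g L : ~ is_zero lt a -> B a g ->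
  (forall l s, child a l s -> ~ List.In l L -> forall y, supp s y -> g (l :: y) = 0) ->
  g = fsum (map (fun l => graft l (fun y => g (l :: y)))
                (prune (fun l => exists s, child a l s) L)).
Proof.
move=> Hz Hg HL; apply: functional_extensionality => [[|l0 y]].
  by rewrite fsum_graft_nil (B_out Hg (supp_nil Hz)).
case: (classic (List.In l0 (prune (fun l => exists s, child a l s) L))) => Hin.
  by rewrite (@fsum_graft_in _ (fun l y => g (l :: y))) //; exact: prune_NoDup.
rewrite fsum_graft_out //.
case: (classic (supp a (l0 :: y))) => Hd; last exact: B_out Hg Hd.
move/supp_unfold: Hd => [[//]|[l [s [y' [Hc [El Ey] Hy]]]]]; subst l0 y'.
apply: (HL _ _ Hc) _ _ Hy => H; apply: Hin; apply/prune_In; split => //; by exists s.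
Qed.

Lemma germ_cofinite a g c : germ a g c -> ~ is_zero lt a ->
  exists L, forall l s, child a l s -> ~ List.In l L -> forall y, supp s y -> g (l :: y) = c.
Proof. by case=> [[]|[_ H]]. Qed.

Section Decomposition.
Variable beta : option T.
Local Notation ge_beta := (fun t => ~ lt t beta).
Local Notation gt_beta := (fun t => lt beta t).

Lemma vanish_below a g : lt a beta -> B a g -> vanish a ge_beta g.
Proof.
move=> Hab Hg; split => // p t c Hn; case: (node_le Hn) => [->|H] []//.
exact: ext_lt_trans H Hab.
Qed.

Lemma decomp_at g : B beta g ->
  decomp (atom (B beta) (vanish beta ge_beta)) (vanish beta ge_beta) g.
Proof.
move=> Hg; have [c Hc] := germ_exists Hg.
have vanish_root h : B beta h -> (forall c, germ beta h c -> c = 0) -> vanish beta ge_beta h.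
  move=> Hh Hh0; split => // p t c' Hn Ct Hv.
  by have [Ep Et] := node_root_only Hn Ct; subst p t; exact: Hh0.
case: (classic (c = 0)) => Hc0.
  exists [::], g; split => //; last by fun_ring.
  by apply: vanish_root => // c' Hc'; rewrite (germ_uniq Hc' Hc).
exists [:: g], f0; split; last by fun_ring.
- move=> g' [<-|//]; split => //.
    move=> [_ H]; apply: Hc0.
    exact: (H [::] beta c (node_root beta) (@ext_lt_irr T beta) Hc).
  move=> r Hr; have [k Hk] := germ_exists Hr; exists k.
  apply: vanish_root => [|c'].
    by apply: (B_op (op := fun x y => x * y - k * y)) _ Hr Hg; rewrite !mulr0 subr0.
  move/germ_uniq; apply; rewrite -(subrr (k * c)).
  exact: (germ_op (fun x y => x * y - k * y) Hk Hc).
- exact: vanish0.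
Qed.

Lemma decomp_atoms a g : B a g -> germs_vanish a gt_beta g ->
  decomp (atom (B a) (vanish a ge_beta)) (vanish a ge_beta) g.
Proof.
induction (ext_wf T a) as [a _ IH] in g |- * => Hg Hnv.
case: (ext_lt_total a beta) => [Hab|[Eab|Hba]].
- by exists [::], g; split => //; [exact: vanish_below|fun_ring].
- by subst a; exact: decomp_at.
have Hz := gt_nonzero Hba.
have [c Hc] := germ_exists Hg.
have Ec := germs_vanish_root Hnv Hba Hc; subst c.
have [L HL] := germ_cofinite Hc Hz.
rewrite (B_children_sum Hz Hg HL); apply: decomp_fsum; [exact: vanish0|exact: vanishD|].
move=> h /List.in_map_iff [l [<- /prune_In [_ [s Hcs]]]].
apply: (decomp_map (F := graft l)); [exact: graft0|exact: graftD| | |].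
- by move=> g'; exact: atom_graft Hcs.
- by move=> z; exact: vanish_graft Hcs.
- apply: IH; [exact: child_lt Hcs|exact: B_child Hg Hcs|exact: germs_vanish_child Hnv Hcs].
Qed.

Definition orth_split a g := exists e1 e2, [/\ B a e1, B a e2,
  (forall x, e1 x * e1 x = e1 x /\ e1 x * e2 x = 0),
  ~ vanish a ge_beta (fmul g e1) & ~ vanish a ge_beta (fmul g e2)].

Lemma vanish_mul_graft a g l s e : child a l s ->
  vanish a ge_beta (fmul g (graft l e)) -> vanish s ge_beta (fun y => g (l :: y) * e y).
Proof.
move=> Hc /(vanish_child) /(_ Hc).
by have -> : (fun y => fmul g (graft l e) (l :: y)) = (fun y => g (l :: y) * e y)
  by apply: functional_extensionality => y; rewrite /fmul graft_eq.
Qed.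

Lemma orth_split_graft a g l s : child a l s ->
  orth_split s (fun y => g (l :: y)) -> orth_split a g.
Proof.
move=> Hc [e1 [e2 [He1 He2 He Hz1 Hz2]]].
exists (graft l e1), (graft l e2); split; try exact: B_graft Hc _.
- case=> [|l' y] /=; first by rewrite mulr0.
  by case: excluded_middle_informative => E; [exact: He|rewrite mulr0].
- by move/(vanish_mul_graft Hc).
- by move/(vanish_mul_graft Hc).
Qed.

Lemma orth_split_root a g c : lt beta a -> B a g -> germ a g c -> c != 0 -> orth_split a g.
Proof.
move=> Hba Hg Hc Hc0.
have Hz := gt_nonzero Hba.
have [L HL] := germ_cofinite Hc Hz.
have [l1 [s1 [Hc1 Hin1 Hs1]]] := child_avoid L Hba.
have [l2 [s2 [Hc2 Hin2 Hs2]]] := child_avoid (l1 :: L) Hba.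
have Hne : l2 <> l1 by move=> E; apply: Hin2; left.
have notZ l s : child a l s -> ~ List.In l L -> ~ lt s beta ->
    ~ vanish a ge_beta (fmul g (graft l (Bone s))).
  move=> Hcl Hinl Hsl /(vanish_mul_graft Hcl) [_ HN]; move/eqP: Hc0; apply.
  apply: (HN [::] s c (node_root s) Hsl); apply: eq_germ (germ_cst s c) => y Hy.
  by rewrite Bone_in // (HL _ _ Hcl Hinl _ Hy) mulr1.
exists (graft l1 (Bone s1)), (graft l2 (Bone s2)); split.
- exact: B_graft Hc1 (B_Bone s1).
- exact: B_graft Hc2 (B_Bone s2).
- case=> [|l y] /=; first by rewrite mulr0.
  split; first by case: excluded_middle_informative => E; rewrite ?Bone_idem ?mulr0.
  case: excluded_middle_informative => E1; last by rewrite mul0r.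
  case: excluded_middle_informative => E2; last by rewrite mulr0.
  by case: Hne; subst.
- exact: notZ Hc1 Hin1 Hs1.
- by apply: notZ Hc2 _ Hs2 => H; apply: Hin2; right.
Qed.

(** Combined with [minimal_orthogonal], this keeps an element with a nonzero germ above
    [beta] out of every minimal ideal over [vanish a ge_beta]. *)
Lemma nonvanishing_orth_split a g : B a g -> ~ germs_vanish a gt_beta g -> orth_split a g.
Proof.
induction (ext_wf T a) as [a _ IH] in g |- * => Hg Hnv.
case: (classic (forall l s, child a l s -> germs_vanish s gt_beta (fun y => g (l :: y)))) => Hch.
  have [c Hc] := germ_exists Hg.
  case: (classic (lt beta a /\ c != 0)) => [[Hba Hc0]|Hroot]; first exact: orth_split_root Hc Hc0.
  case: Hnv; apply/germs_vanish_unfold; split => // Hba c' Hc'.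
  rewrite (germ_uniq Hc' Hc); apply/eqP; apply: NNPP => Hc0.
  by apply: Hroot; split => //; apply/negP.
have [l [s [Hcl HN]]] : exists l s, child a l s /\ ~ germs_vanish s gt_beta (fun y => g (l :: y)).
  apply: NNPP => H; apply: Hch => l s Hcl; apply: NNPP => HN; apply: H; by exists l, s.
apply: (orth_split_graft Hcl); exact: IH (child_lt Hcl) _ (B_child Hg Hcl) HN.
Qed.

Lemma finite_nonzero_germs a g : B a g -> germs_vanish a gt_beta g ->
  exists Lp : list Pt, forall p c, node a p beta ->
     germ beta (fun y => g (p ++ y)) c -> c <> 0 -> List.In p Lp.
Proof.
induction (ext_wf T a) as [a _ IH] in g |- * => Hg Hnv.
case: (ext_lt_total a beta) => [Hab|[Eab|Hba]].
- exists [::] => p c Hn; case: (node_le Hn) => [E|H].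
  + by subst; case: (ext_lt_irr Hab).
  + by case: (ext_lt_asym H Hab).
- subst; exists [:: [::]] => p c Hn _ _.
  by have [-> _] := node_root_only Hn (@ext_lt_irr T beta); left.
have Hz := gt_nonzero Hba.
have [c Hc] := germ_exists Hg.
have Ec := germs_vanish_root Hnv Hba Hc; subst c.
have [L HL] := germ_cofinite Hc Hz.
have [Lp HLp] : exists Lp, forall l s p c, List.In l L -> child a l s -> node s p beta ->
    germ beta (fun y => g (l :: p ++ y)) c -> c <> 0 -> List.In (l :: p) Lp.
  elim: L {HL} => [|l0 L0 [Lp0 H0]]; first by exists [::].
  case: (classic (exists s, child a l0 s)) => [[s0 Hc0]|Hnc]; last first.
    exists Lp0 => l s p c [E|Hin] Hcl; last exact: H0 Hin Hcl.
    by subst; case: Hnc; exists s.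
  have [Lq Hq] := IH s0 (child_lt Hc0) _ (B_child Hg Hc0) (germs_vanish_child Hnv Hc0).
  exists (map (cons l0) Lq ++ Lp0) => l s p c [E|Hin] Hcl Hn Hv Hc'; apply: List.in_or_app.
  + subst l; rewrite (child_uniq Hcl Hc0) in Hn; left; apply: List.in_map.
    exact: Hq Hn Hv Hc'.
  + by right; exact: H0 Hin Hcl Hn Hv Hc'.
exists Lp => p c Hn Hv Hc'.
inversion Hn as [b|b l s q t Hcl Hn']; subst; first by case: (ext_lt_irr Hba).
case: (classic (List.In l L)) => HinL; first exact: HLp HinL Hcl Hn' Hv Hc'.
case: Hc'; apply: germ_supp0 Hv => y Hy; apply: (HL _ _ Hcl HinL).
exact: supp_node Hn' Hy.
Qed.

End Decomposition.

Lemma germs_vanish_limit a t g : is_limit lt t -> B a g ->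
  germs_vanish a (fun v => ~ lt v t) g ->
  exists s, lt s t /\ germs_vanish a (fun v => ~ lt v s) g.
Proof.
move=> Hl; induction (ext_wf T a) as [a _ IH] in g |- * => Hg Hnv.
case: (classic (lt a t)) => Hat.
  have [s [Has Hst]] := limit_dense Hl Hat.
  exists s; split => // p v c Hn Cv; case: Cv; case: (node_le Hn) => [->//|H].
  exact: ext_lt_trans H Has.
have Hz : ~ is_zero lt a.
  move=> H; case: Hl => [[w Hw] _]; apply: (H w).
  by case: (ext_lt_ge Hat) => [<-|Hta]; [|exact: ext_lt_trans Hw Hta].
have [c Hc] := germ_exists Hg.
have Ec := germs_vanish_root Hnv Hat Hc; subst c.
have [L HL] := germ_cofinite Hc Hz.
pose Q l s := forall s0, child a l s0 -> germs_vanish s0 (fun v => ~ lt v s) (fun y => g (l :: y)).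
have [s [Hst Hs]] : exists s, lt s t /\ forall l, List.In l L -> Q l s.
  apply: limit_upper_bound => // [l s s' H Hss' s0 Hc0|l _].
    by apply: germs_vanish_sub (H _ Hc0) => v Hv Hvs; apply: Hv; exact: ext_lt_trans Hvs Hss'.
  case: (classic (exists s0, child a l s0)) => [[s0 Hc0]|Hnc].
    have [s [Hst Hs]] := IH s0 (child_lt Hc0) _ (B_child Hg Hc0) (germs_vanish_child Hnv Hc0).
    by exists s; split => // s1 Hc1; rewrite (child_uniq Hc1 Hc0).
  by case: Hl => [[s Hs] _]; exists s; split => // s1 Hc1; case: Hnc; exists s1.
exists s; split => //; apply/germs_vanish_unfold; split=> [_ c Hv|l s0 Hc0].
  exact: germ_uniq Hv Hc.
case: (classic (List.In l L)) => Hin; first exact: Hs Hin _ Hc0.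
by apply: germs_vanish_supp0 => y Hy; exact: HL Hc0 Hin _ Hy.
Qed.

Fixpoint ind_node (p : Pt) (t : option T) : Pt -> K :=
  if p is l :: p then graft l (ind_node p t) else Bone t.

Lemma B_ind_node a p t : node a p t -> B a (ind_node p t).
Proof. by elim=> [b|b l s q v Hc _ IH] /=; [exact: B_Bone|exact: B_graft Hc IH]. Qed.

Lemma germ_ind_node a p0 beta : node a p0 beta -> forall p t c, node a p t -> ~ lt t beta ->
  germ t (fun y => ind_node p0 beta (p ++ y)) c -> (p = p0 -> c = 1) /\ (p <> p0 -> c = 0).
Proof.
elim=> [b|b l0 s0 q0 v Hc0 Hn0 IH] p t c Hn Ht Hv.
  have [Ep Et] := node_root_only Hn Ht; subst p t.
  by split => //= _; exact: germ_uniq Hv (germ_Bone b).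
inversion Hn as [b'|b' l s q t' Hc Hn']; subst.
  by have := germ_uniq Hv (germ_graft _ Hc0); split.
case: (classic (l = l0)) => El.
  subst l; rewrite (child_uniq Hc Hc0) in Hn'.
  have [H1 H2] := IH _ _ _ Hn' Ht (eq_germ (fun y _ => graft_eq _ _ _) Hv).
  by split => H; [apply: H1; case: H|apply: H2 => H'; apply: H; subst].
have -> : c = 0 by apply: germ_supp0 Hv => y _; exact: graft_ne.
by split => // - [].
Qed.

End Tree.

(** * [B_{a,n}] and its socle sequence *)

Lemma mem_In (A : eqType) (x : A) (s : seq A) : x \in s -> List.In x s.
Proof.
elim: s => //= y s IH; rewrite in_cons => /orP [/eqP ->|H]; [by left|right; exact: IH].
Qed.

Section Copies.
Variables (K : fieldType) (T : wo) (n : nat).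
Local Notation lt := (@ext_lt T).
Local Notation Pt := (Pt T).
Local Notation X := ('I_n * Pt)%type.
Local Notation Bn := (Bn K T n).

Definition coord (f : X -> K) (i : 'I_n) : Pt -> K := fun x => f (i, x).
Definition embed (i : 'I_n) (h : Pt -> K) : X -> K := fun ix => if ix.1 == i then h ix.2 else 0.
Definition vanishn (C : option T -> Prop) : fpred K X :=
  fun f => Bn f /\ forall i, germs_vanish None C (coord f i).

Lemma Bn_op (op : K -> K -> K) f g : op 0 0 = 0 -> Bn f -> Bn g ->
  Bn (fun x => op (f x) (g x)).
Proof. by move=> op0 Hf Hg i; exact: (B_op (op := op)) op0 (Hf i) (Hg i). Qed.

Lemma coord_embed i j h : coord (embed i h) j = if j == i then h else (fun _ => 0).
Proof. by apply: functional_extensionality => x; rewrite /coord /embed /=; case: (j == i). Qed.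

Lemma Bn_embed i h : B None h -> Bn (embed i h).
Proof.
move=> Hh j; have := coord_embed i j h; rewrite /coord => ->.
by case: (j == i) => //; exact: B0.
Qed.

Lemma embed0 i : embed i f0 = f0.
Proof. by apply: functional_extensionality => x; rewrite /embed /f0; case: (_ == _). Qed.

Lemma embedD i f g : embed i (fadd f g) = fadd (embed i f) (embed i g).
Proof.
by apply: functional_extensionality => x; rewrite /embed /fadd; case: (_ == _); rewrite ?addr0.
Qed.

Lemma sum_embed f : f = fsum (map (fun i => embed i (coord f i)) (enum 'I_n)).
Proof.
apply: functional_extensionality => [[j x]].
rewrite fsumE big_map /embed /coord /= -big_mkcond -big_filter.
have -> : [seq i <- enum 'I_n | j == i] = [:: j].
  rewrite (eq_filter (a2 := pred1 j)); last by move=> i /=; rewrite eq_sym.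
  by rewrite filter_pred1_uniq ?enum_uniq // mem_enum.
by rewrite big_seq1.
Qed.

Lemma Bn_falg : is_falg Bn.
Proof.
split; first by move=> i; exact: B0.
split.
- by move=> f g; exact: (Bn_op (op := +%R) (addr0 _)).
- by move=> f Hf; exact: (Bn_op (op := fun x _ => - x) (oppr0 _) Hf Hf).
- by move=> f g; exact: (Bn_op (op := *%R) (mulr0 _)).
- by move=> k f Hf; exact: (Bn_op (op := fun x _ => k * x) (mulr0 _) Hf Hf).
exists (fun ix => Bone K None ix.2); split; first by move=> i; exact: B_Bone.
move=> f Hf; apply: functional_extensionality => [[i x]].
by have := congr1 (fun F => F x) (Bone_mul (Hf i)).
Qed.

Lemma Bn_vN : vN_regular Bn.
Proof.
move=> a Ha; exists (fun x => (a x)^-1); split.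
  exact: (Bn_op (op := fun x _ => x^-1) (invr0 _) Ha Ha).
apply: functional_extensionality => x; rewrite /fmul.
by case: (eqVneq (a x) 0) => [->|H]; [rewrite !mul0r|rewrite mulfV // mul1r].
Qed.

Lemma vanishn_ideal C : is_ideal Bn (vanishn C).
Proof.
split.
- by move=> f [].
- by split=> [i|i]; [exact: B0|exact: germs_vanish_supp0].
- move=> f g [Hf Nf] [Hg Ng]; split; first exact: (Bn_op (op := +%R) (addr0 _) Hf Hg).
  by move=> i; exact: (germs_vanish_op (op := +%R) (addr0 _) (Hf i) (Hg i) (Nf i) (Ng i)).
- move=> f [Hf Nf]; split; first exact: (Bn_op (op := fun x _ => - x) (oppr0 _) Hf Hf).
  move=> i; exact: (germs_vanish_op (op := fun x _ => - x) (oppr0 _) (Hf i) (Hf i) (Nf i) (Nf i)).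
- move=> r f Hr [Hf Nf]; split; first exact: (Bn_op (op := *%R) (mulr0 _) Hr Hf).
  by move=> i; exact: germs_vanish_mull (Hr i) (Hf i) (Nf i).
Qed.

Lemma vanishn_embed C i h : vanish None C h -> vanishn C (embed i h).
Proof.
move=> [Hh Nh]; split; first exact: Bn_embed.
by move=> j; rewrite coord_embed; case: (j == i) => //; exact: germs_vanish_supp0.
Qed.

Lemma atom_embed C i h : atom (B None) (vanish None C) h -> atom Bn (vanishn C) (embed i h).
Proof.
move=> [Hb Hz Ha]; split; first exact: Bn_embed.
  by move=> [_ H]; apply: Hz; split => //; have := H i; rewrite coord_embed eqxx.
move=> r Hr; have [k Hk] := Ha _ (Hr i); exists k.
have -> : fadd (fmul r (embed i h)) (fopp (fscale k (embed i h))) =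
          embed i (fun y => r (i, y) * h y - k * h y).
  apply: functional_extensionality => [[j x]]; rewrite /fadd /fmul /fopp /fscale /embed /=.
  by case: eqP => [->//|_]; rewrite !mulr0 subrr.
exact: vanishn_embed.
Qed.

Section Socle.
Variable beta : option T.
Local Notation ge_beta := (fun t => ~ lt t beta).
Local Notation gt_beta := (fun t => lt beta t).

Lemma soc_next_vanishn_sub : fsubset (soc_next Bn (vanishn ge_beta)) (vanishn gt_beta).
Proof.
apply: soc_next_sub; first exact: vanishn_ideal.
  by move=> g [Hg Ng]; split => // i; apply: germs_vanish_sub (Ng i) => t; exact: ext_lt_asym.
move=> M HM g Mg; apply: NNPP => nJ.
have Pg : Bn g by case: HM => [[H _ _ _ _] _ _ _]; apply: H.
have [i Hi] : exists i, ~ germs_vanish None gt_beta (coord g i).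
  apply: NNPP => H; apply: nJ; split => // i; apply: NNPP => H'; apply: H; by exists i.
have [e1 [e2 [He1 He2 He nZ1 nZ2]]] := nonvanishing_orth_split (Pg i) Hi.
have coord_mul e : coord (fmul g (embed i e)) i = fmul (coord g i) e.
  by apply: functional_extensionality => x; rewrite /coord /fmul /embed /= eqxx.
have nZ e : ~ vanish None ge_beta (fmul (coord g i) e) -> ~ vanishn ge_beta (fmul g (embed i e)).
  by move=> nZe [Hb HN]; apply: nZe; rewrite -coord_mul; split; [exact: Hb|exact: HN].
have He' x : embed i e1 x * embed i e1 x = embed i e1 x /\ embed i e1 x * embed i e2 x = 0.
  by case: x => j x; rewrite /embed /=; case: (j == i); [exact: He|rewrite !mul0r].
case: (minimal_orthogonal (vanishn_ideal _) HM Mg (Bn_embed i He1) (Bn_embed i He2) He').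
- exact: nZ nZ1.
- exact: nZ nZ2.
Qed.

Lemma vanishn_sub_soc_next : fsubset (vanishn gt_beta) (soc_next Bn (vanishn ge_beta)).
Proof.
move=> f [Hf Nf]; apply: (decomp_soc_next Bn_falg (vanishn_ideal _) Hf).
rewrite (sum_embed f); apply: decomp_fsum.
- exact: (ideal0 (vanishn_ideal _)).
- exact: (idealD (vanishn_ideal _)).
move=> h /List.in_map_iff [i [<- _]].
apply: (decomp_map (F := embed i) (A := atom (B None) (vanish None ge_beta))
   (Z := vanish None ge_beta)); [exact: embed0|exact: embedD| | |].
- exact: atom_embed.
- exact: vanishn_embed.
- exact: decomp_atoms (Hf i) (Nf i).
Qed.

Lemma soc_next_vanishn : soc_next Bn (vanishn ge_beta) = vanishn gt_beta.
Proof.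
apply: functional_extensionality => f; apply: propositional_extensionality.
by split; [exact: soc_next_vanishn_sub|exact: vanishn_sub_soc_next].
Qed.

End Socle.

Lemma vanishn_zero t f : is_zero lt t -> (vanishn (fun v => ~ lt v t) f <-> f = f0).
Proof.
move=> Hz; split=> [[Hf Nf]|->]; last by split=> i; [exact: B0|exact: germs_vanish_supp0].
apply: functional_extensionality => [[i x]].
case: (classic (supp K None x)) => Hx; last exact: B_out (Hf i) Hx.
have [t0 [Hn Hz0]] := leaf_node Hx.
apply: (Nf i x t0 _ Hn (Hz t0)); left; split => //; by rewrite cats0.
Qed.

Lemma vanishn_limit t f : is_limit lt t ->
  vanishn (fun v => ~ lt v t) f <-> exists s, lt s t /\ vanishn (fun v => ~ lt v s) f.
Proof.
move=> Hl; split=> [[Hf Nf]|[s [Hst [Hf Nf]]]]; last first.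
  split => // i; apply: germs_vanish_sub (Nf i) => v Hv Hvs; apply: Hv; exact: ext_lt_trans Hvs Hst.
have [s [Hst Hs]] : exists s, lt s t /\
    forall i, List.In i (enum 'I_n) -> germs_vanish None (fun v => ~ lt v s) (coord f i).
  apply: limit_upper_bound => // [i s s' H Hss'|i _].
    by apply: germs_vanish_sub H => v Hv Hvs; apply: Hv; exact: ext_lt_trans Hvs Hss'.
  exact: germs_vanish_limit Hl (Hf i) (Nf i).
by exists s; split => //; split => // i; apply: Hs; apply: mem_In; rewrite mem_enum.
Qed.

Lemma Sseq_unfold t : Sseq Bn T t = fun f => (is_zero lt t /\ f = f0) \/
    (exists s (h : lt s t), is_pred lt s t /\ soc_next Bn (Sseq Bn T s) f) \/
    (is_limit lt t /\ exists s (h : lt s t), Sseq Bn T s f).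
Proof. by rewrite /Sseq /soc_seq Fix_unfold. Qed.

Lemma Sseq_vanishn t : Sseq Bn T t = vanishn (fun v => ~ lt v t).
Proof.
induction (ext_wf T t) as [t _ IH].
rewrite Sseq_unfold; apply: functional_extensionality => f; apply: propositional_extensionality.
case: (ordinal_cases t) => [Hz|[[s Hp]|Hl]].
- rewrite vanishn_zero //; split; last by move=> ->; left.
  by case=> [[_ ->]//|[[s [h _]]|[[[s Hs] _] _]]]; case: (Hz s).
- have Hst := proj1 Hp.
  rewrite -(gt_pred_ge Hp) -soc_next_vanishn -(IH s Hst); split.
  + case=> [[Hz _]|[[s' [h [Hp' Hs]]]|[[_ Hnp] _]]]; first by case: (Hz s).
      by rewrite -(pred_uniq Hp' Hp).
    by case: Hnp; exists s.
  + by move=> Hf; right; left; exists s, Hst.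
- rewrite vanishn_limit //; split.
  + case=> [[Hz _]|[[s' [_ [Hp' _]]]|[_ [s [h Hs]]]]].
    * by case: Hl => [[s Hs] _]; case: (Hz s).
    * by case: Hl => _ []; exists s'.
    * by exists s; rewrite -IH.
  + by move=> [s [Hst Hs]]; right; right; split => //; exists s, Hst; rewrite IH.
Qed.

End Copies.

(** * The layers *)

Section Layers.
Variables (K : fieldType) (T : wo) (n : nat).
Local Notation lt := (@ext_lt T).
Local Notation Pt := (Pt T).
Local Notation X := ('I_n * Pt)%type.
Local Notation Bn := (Bn K T n).
Local Notation vanishn := (@vanishn K T n).

Definition germ_val (t : option T) (g : Pt -> K) : K := epsilon (inhabits 0) (germ t g).

Lemma germ_valE t g c : germ t g c -> germ_val t g = c.
Proof. by move=> H; apply: germ_uniq (epsilon_spec (inhabits 0) (germ t g) (ex_intro _ c H)) H. Qed.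

Variables (beta : option T) (Ix : Type) (nd : Ix -> X).
Hypothesis nd_inj : injective nd.
Hypothesis nd_node : forall v, node None (nd v).2 beta.
Hypothesis nd_onto : forall i p, node None p beta -> exists v, nd v = (i, p).
Hypothesis Ix_inh : inhabited Ix.

Local Notation ge_beta := (fun t => ~ lt t beta).
Local Notation gt_beta := (fun t => lt beta t).

Definition layer_map (f : X -> K) (v : Ix) : K :=
  germ_val beta (fun y => f ((nd v).1, (nd v).2 ++ y)).

Lemma germ_layer_map f v : Bn f -> germ beta (fun y => f ((nd v).1, (nd v).2 ++ y)) (layer_map f v).
Proof.
move=> Hf; have [c Hc] := germ_node (nd_node v) (Hf (nd v).1).
by rewrite /layer_map (germ_valE Hc).
Qed.

Lemma layer_map_op (op : K -> K -> K) f g : Bn f -> Bn g ->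
  layer_map (fun x => op (f x) (g x)) = fun v => op (layer_map f v) (layer_map g v).
Proof.
move=> Hf Hg; apply: functional_extensionality => v; apply: germ_valE.
exact: (germ_op op (germ_layer_map v Hf) (germ_layer_map v Hg)).
Qed.

Definition node_unit (v0 : Ix) : X -> K := embed (nd v0).1 (ind_node K (nd v0).2 beta).

Lemma vanishn_node_unit v0 : vanishn gt_beta (node_unit v0).
Proof.
split; first by apply: Bn_embed; exact: B_ind_node (nd_node v0).
move=> j; rewrite /node_unit coord_embed; case: (j == _); last exact: germs_vanish_supp0.
move=> p t c Hn Ct Hv.
have Hp : p <> (nd v0).2.
  by move=> Ep; subst p; have Et := node_uniq Hn (nd_node v0); subst t; exact: ext_lt_irr Ct.
exact: (proj2 (germ_ind_node (nd_node v0) Hn (ext_lt_asym Ct) Hv) Hp).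
Qed.

Lemma layer_map_node_unit v0 v :
  (v = v0 -> layer_map (node_unit v0) v = 1) /\ (v <> v0 -> layer_map (node_unit v0) v = 0).
Proof.
have := germ_layer_map v (proj1 (vanishn_node_unit v0)).
rewrite /node_unit /embed /=; case: eqP => Ei HV; last first.
  by split => [E|_]; [subst|exact: germ_uniq HV (germ_cst beta 0)].
have [H1 H2] := germ_ind_node (nd_node v0) (nd_node v) (@ext_lt_irr T beta) HV.
split => [Ev|Hne]; first by apply: H1; rewrite Ev.
apply: H2 => Ep; apply: Hne; apply: nd_inj.
by move: Ei Ep; case: (nd v) => ? ?; case: (nd v0) => ? ? /= -> ->.
Qed.

Lemma layer_map_finsupp f : vanishn gt_beta f -> finsupp Ix (layer_map f).
Proof.
move=> [Hf Nf].
have [LL HLL] : exists LL : list X, forall i, List.In i (enum 'I_n) -> forall p c,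
    node None p beta -> germ beta (fun y => f (i, p ++ y)) c -> c <> 0 -> List.In (i, p) LL.
  elim: (enum 'I_n) => [|i l [LL0 H0]]; first by exists [::].
  have [Lp HLp] := finite_nonzero_germs (Hf i) (Nf i).
  exists (map (fun p => (i, p)) Lp ++ LL0) => j [E|Hj] p c Hn Hv Hc; apply: List.in_or_app.
  + by subst j; left; apply: (List.in_map (fun p => (i, p))); exact: HLp Hn Hv Hc.
  + by right; exact: H0 Hj p c Hn Hv Hc.
pose ix x := epsilon Ix_inh (fun v => nd v = x).
exists (map ix LL) => v Hv; apply: NNPP => Hc.
have Hin : List.In (nd v) LL.
  have := HLL (nd v).1 (mem_In (mem_enum _ _)) _ _ (nd_node v) (germ_layer_map v Hf) Hc.
  by case: (nd v).
apply: Hv; have Ee := epsilon_spec Ix_inh (fun w => nd w = nd v) (ex_intro _ v erefl).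
by rewrite -(nd_inj Ee); exact: (List.in_map ix).
Qed.

Lemma layer_map_onto w : finsupp Ix w -> exists f, vanishn gt_beta f /\ layer_map f = w.
Proof.
have HI := vanishn_ideal K n gt_beta.
move=> [L HL].
have [f [Jf Hf]] : exists f, vanishn gt_beta f /\ forall v,
    (List.In v L -> layer_map f v = w v) /\ (~ List.In v L -> layer_map f v = 0).
  elim: L {HL} => [|v0 L [f [Jf Hf]]].
    exists f0; split; first exact: (ideal0 HI).
    by move=> v; split => // _; apply: germ_valE; exact: germ_cst.
  pose c := w v0 - layer_map f v0.
  have JE : vanishn gt_beta (fscale c (node_unit v0)).
    exact: (idealZ (Bn_falg K T n) HI c (vanishn_node_unit v0)).
  exists (fadd f (fscale c (node_unit v0))); split; first exact: (idealD HI Jf JE).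
  move=> v; rewrite (layer_map_op +%R (proj1 Jf) (proj1 JE)).
  have HE := proj1 (vanishn_node_unit v0).
  rewrite (layer_map_op (fun _ y => c * y) HE HE).
  case: (classic (v = v0)) => Ev.
    subst v; rewrite (proj1 (layer_map_node_unit v0 v0) erefl) mulr1 /c addrC subrK.
    by split => // H; case: H; left.
  rewrite (proj2 (layer_map_node_unit v0 v) Ev) mulr0 addr0; case: (Hf v) => H1 H2.
  split => H; first by apply: H1; case: H => // E; case: Ev.
  by apply: H2 => H'; apply: H; right.
exists f; split => //; apply: functional_extensionality => v.
case: (classic (List.In v L)) => Hv; last by rewrite (proj2 (Hf v) Hv) HL.
by case: (Hf v) => H _; apply: H.
Qed.

Lemma layer_map_kernel f : vanishn gt_beta f ->
  (layer_map f = fun _ => 0) <-> vanishn ge_beta f.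
Proof.
move=> [Hf Nf]; split=> [H0|[_ N0]]; last first.
  apply: functional_extensionality => v.
  exact: (N0 (nd v).1 (nd v).2 beta _ (nd_node v) (@ext_lt_irr T beta) (germ_layer_map v Hf)).
split => // i p t c Hn Ct Hv.
case: (ext_lt_total t beta) => [H|[Et|H]]; [by case: Ct| |exact: Nf i p t c Hn H Hv].
subst t; have [v Ev] := nd_onto i Hn.
have := germ_layer_map v Hf; rewrite Ev /= => Hv'.
by rewrite (germ_uniq Hv Hv') H0.
Qed.

Lemma layer_iso_nodes : layer_iso Bn (Sseq Bn T beta) Ix.
Proof.
rewrite /layer_iso Sseq_vanishn soc_next_vanishn.
exists layer_map; split; first exact: layer_map_finsupp.
split.
- by move=> f g [Hf _] [Hg _]; exact: (layer_map_op +%R).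
- by move=> k f [Hf _]; exact: (layer_map_op (fun x _ => k * x) Hf Hf).
- by move=> f g [Hf _] [Hg _]; exact: (layer_map_op *%R).
- exact: layer_map_onto.
- exact: layer_map_kernel.
Qed.

End Layers.

Section Main.
Variables (K : fieldType) (T : wo) (n : nat).
Hypothesis n_gt0 : (0 < n)%N.
Local Notation lt := (@ext_lt T).
Local Notation X := ('I_n * Pt T)%type.
Local Notation Bn := (Bn K T n).

Definition rank_nodes (beta : option T) := {x : X | node None x.2 beta}.

Lemma rank_nodes_layer beta :
  inhabited (rank_nodes beta) /\ layer_iso Bn (Sseq Bn T beta) (rank_nodes beta).
Proof.
have val_inj : injective (@proj1_sig X (fun x => node None x.2 beta)).
  by move=> [x Hx] [y Hy] /= E; subst y; congr exist; exact: proof_irrelevance.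
have inh : inhabited (rank_nodes beta).
  have [p Hp] : exists p, node None p beta.
    by apply: node_exists; case: (beta) => [b|]; [right|left].
  by constructor; exists (Ordinal n_gt0, p).
split => //; apply: (layer_iso_nodes K val_inj) => //; first by case.
by move=> i p Hp; exists (exist _ (i, p) Hp).
Qed.

Lemma Bn_loewy : loewy Bn T.
Proof.
rewrite /loewy Sseq_vanishn soc_next_vanishn; split.
  by move=> f; split=> [[]//|Hf]; split=> // i p t c _ [].
move=> /(_ (fun ix => Bone K None ix.2)) [_ /(_ (fun i => B_Bone K None))] [_ N].
have := N (Ordinal n_gt0) [::] None 1 (node_root None) (@ext_lt_irr T None) (germ_Bone K None).
by move/eqP; rewrite oner_eq0.
Qed.

Lemma Bn_top_dim : top_dim Bn T n.
Proof.
apply: (layer_iso_nodes K (nd := fun i : 'I_n => (i, [::] : Pt T))).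
- by move=> i j [].
- by move=> i; exact: node_root.
- by move=> i p Hp; exists i; have [-> _] := node_root_only Hp (@ext_lt_irr T None).
- by constructor; exact: Ordinal n_gt0.
Qed.

Lemma Bn_in_RK : in_RK Bn.
Proof.
split; [exact: Bn_falg|exact: Bn_vN|].
exists T; split; first exact: Bn_loewy.
by move=> beta; exists (rank_nodes beta); exact: rank_nodes_layer.
Qed.

Lemma countable_rank_nodes beta : countable T -> countable (rank_nodes beta).
Proof.
move=> [fT fT_inj].
pose cl (l : nat + option T) : nat + option nat :=
  match l with inl m => inl m | inr o => inr (omap fT o) end.
have cl_inj : injective cl.
  move=> [m|o] [m'|o'] //= [E]; first by subst.
  by congr inr; case: o o' E => [a|] [b|] //= [E]; rewrite (fT_inj _ _ E).
exists (fun v : rank_nodes beta => pickle ((sval v).1, map cl (sval v).2)).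
move=> [[i p] Hp] [[j q] Hq] /= /(pcan_inj pickleK_inv) [E1 /(inj_map cl_inj) E2]; subst.
by congr exist; exact: proof_irrelevance.
Qed.

Lemma Bn_countable_type : countable T -> countable_type Bn.
Proof.
move=> HT; split; first exact: Bn_in_RK.
exists T; split; [exact: Bn_loewy|exact: HT|move=> beta].
have [inh Hl] := rank_nodes_layer beta.
by exists (rank_nodes beta); split => //; exact: countable_rank_nodes.
Qed.

End Main.

Theorem lemma6p6 (K : fieldType) (T : wo) (n : nat) :
  (0 < n)%N ->
  [/\ in_RK (Bn K T n), loewy (Bn K T n) T, top_dim (Bn K T n) T n &
      (countable T -> countable_type (Bn K T n))].
Proof.
move=> n_gt0; split; [exact: Bn_in_RK|exact: Bn_loewy|exact: Bn_top_dim|exact: Bn_countable_type].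
Qed.
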